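(* Let $\beta$ be a parameter and consider the map $\varphi:(x_0,x_1,x_2,x_3)\mapsto\big(x_1,x_2,x_3,(x_1x_3+\beta)/x_0\big)$ on $\mathbb{C}^4$, equivalently the recurrence $$x_{n+2}x_{n-2}=x_{n+1}x_{n-1}+\beta.$$ Define $$\mathcal{Q}_0=\frac{x_0+x_2}{x_1},\qquad \mathcal{Q}_1=\frac{x_1+x_3}{x_2},\qquad \mathcal{Q}_2=\frac{x_1}{x_0}+\frac{x_2}{x_3}+\frac{\beta}{x_0x_3},$$ and $$\tilde{\mathcal{J}}_1=\mathcal{Q}_0\mathcal{Q}_1\mathcal{Q}_2-\mathcal{Q}_0-\mathcal{Q}_1-\mathcal{Q}_2,\quad \tilde{\mathcal{J}}_2=\mathcal{Q}_0\mathcal{Q}_1+\mathcal{Q}_1\mathcal{Q}_2+\mathcal{Q}_2\mathcal{Q}_0-3,\quad \tilde{\mathcal{J}}_3=\mathcal{Q}_0\mathcal{Q}_1\mathcal{Q}_2.$$ Then $\varphi$ is superintegrable: $\tilde{\mathcal{J}}_1,\tilde{\mathcal{J}}_2,\tilde{\mathcal{J}}_3$ are three independent conserved quantities of $\varphi$, with $\{\tilde{\mathcal{J}}_1,\tilde{\mathcal{J}}_2\}_0=0=\{\tilde{\mathcal{J}}_1,\tilde{\mathcal{J}}_3\}_0$ and $\{\tilde{\mathcal{J}}_1,\mathcal{Q}_j\}_0=0$ for $j=0,1,2$, where $\{\cdot,\cdot\}_0$ is the Poisson bracket defined by $\{x_0,x_1\}_0=x_0x_1$, $\{x_0,x_2\}_0=0$,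 $\{x_0,x_3\}_0=x_0x_3$, $\{x_1,x_2\}_0=x_1x_2$, $\{x_1,x_3\}_0=0$, $\{x_2,x_3\}_0=x_2x_3$. The iterates satisfy the sixth-order linear recurrence $$x_{n+6}-\tilde{\mathcal{J}}_1\,x_{n+3}+x_n=0,$$ and the solution of the initial value problem is $$x_{3n+j}=\tilde{\mathcal{A}}_j\,T_n(\tilde{\mathcal{J}}_1/2)+\tilde{\mathcal{B}}_j\,U_n(\tilde{\mathcal{J}}_1/2),\qquad j=0,1,2,$$ where $T_n,U_n$ are the Chebyshev polynomials of the first and second kind and $$\tilde{\mathcal{A}}_j=2x_j-\frac{2x_{j+3}}{\tilde{\mathcal{J}}_1},\qquad \tilde{\mathcal{B}}_j=-x_j+\frac{2x_{j+3}}{\tilde{\mathcal{J}}_1},\qquad j=0,1,2.$$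
   Context: A conserved quantity of $\varphi$ is a function $F$ on $\mathbb{C}^4$ with $F\circ\varphi=F$. Superintegrable here means having $3$ (one less than the phase-space dimension) independent conserved quantities. The Poisson bracket is extended to rational functions by bilinearity and the Leibniz rule. The $\mathcal{Q}_j$ and $\tilde{\mathcal{J}}_1$ are evaluated at the initial data $(x_0,x_1,x_2,x_3)$, and $x_3,x_4,x_5$ denote iterates of the recurrence. *)

From HB Require Import structures.
From mathcomp Require Import all_boot all_order all_algebra.
From mathcomp Require Import fraction.
From mathcomp Require Import mpoly.
Set Implicit Arguments.
Unset Strict Implicit.
Unset Printing Implicit Defensive.
Import Order.TTheory GRing.Theory Num.Theory.
Local Open Scope ring_scope.
Local Open Scope quotient_scope.

Section Quantities.
Variables (K : fieldType) (b : K).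

Definition Q0 (x0 x1 x2 x3 : K) : K := (x0 + x2) / x1.
Definition Q1 (x0 x1 x2 x3 : K) : K := (x1 + x3) / x2.
Definition Q2 (x0 x1 x2 x3 : K) : K := x1 / x0 + x2 / x3 + b / (x0 * x3).

Definition J1 x0 x1 x2 x3 : K :=
  Q0 x0 x1 x2 x3 * Q1 x0 x1 x2 x3 * Q2 x0 x1 x2 x3
  - Q0 x0 x1 x2 x3 - Q1 x0 x1 x2 x3 - Q2 x0 x1 x2 x3.
Definition J2 x0 x1 x2 x3 : K :=
  Q0 x0 x1 x2 x3 * Q1 x0 x1 x2 x3 + Q1 x0 x1 x2 x3 * Q2 x0 x1 x2 x3
  + Q2 x0 x1 x2 x3 * Q0 x0 x1 x2 x3 - 3%:R.
Definition J3 x0 x1 x2 x3 : K :=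
  Q0 x0 x1 x2 x3 * Q1 x0 x1 x2 x3 * Q2 x0 x1 x2 x3.

Definition phi_pt (s : K * K * K * K) : K * K * K * K :=
  let: (a0, a1, a2, a3) := s in (a1, a2, a3, (a1 * a3 + b) / a0).

Definition xseq (x0 x1 x2 x3 : K) (n : nat) : K :=
  (iter n phi_pt (x0, x1, x2, x3)).1.1.1.

Fixpoint chebT (t : K) (n : nat) : K :=
  match n with
  | 0 => 1
  | 1 => t
  | (m.+1 as m1).+1 => 2%:R * t * chebT t m1 - chebT t m
  end.
Fixpoint chebU (t : K) (n : nat) : K :=
  match n with
  | 0 => 1
  | 1 => 2%:R * t
  | (m.+1 as m1).+1 => 2%:R * t * chebU t m1 - chebU t m
  end.
End Quantities.

Notation RF C := {fraction {mpoly C[4]}}.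

Section RationalFunctions.
Variable C : numClosedFieldType.

Definition xv (i : 'I_4) : RF C := tofrac ('X_i : {mpoly C[4]}).
Definition cst (c : C) : RF C := tofrac (c%:MP : {mpoly C[4]}).

Definition num (f : RF C) : {mpoly C[4]} := \n_(repr f).
Definition den (f : RF C) : {mpoly C[4]} := \d_(repr f).

Definition fderiv (i : 'I_4) (f : RF C) : RF C :=
  tofrac ((num f)^`M(i) * den f - num f * (den f)^`M(i)) / tofrac (den f ^+ 2).

Definition fsubst (h : 'I_4 -> RF C) (f : RF C) : RF C :=
  mmap cst h (num f) / mmap cst h (den f).

Definition phi_rf (beta : C) (i : 'I_4) : RF C :=
  match val i with
  | 0 => xv 1
  | 1 => xv 2
  | 2 => xv 3
  | _ => (xv 1 * xv 3 + cst beta) / xv 0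
  end.

Definition conserved (beta : C) (f : RF C) : Prop := fsubst (phi_rf beta) f = f.

Definition pcoef (i j : 'I_4) : int :=
  match val i, val j with
  | 0, 1 => 1 | 1, 0 => -1
  | 0, 3 => 1 | 3, 0 => -1
  | 1, 2 => 1 | 2, 1 => -1
  | 2, 3 => 1 | 3, 2 => -1
  | _, _ => 0
  end.
Definition pb0 (i j : 'I_4) : RF C := (pcoef i j)%:~R * xv i * xv j.

Definition pbracket (f g : RF C) : RF C :=
  \sum_(i < 4) \sum_(j < 4) fderiv i f * fderiv j g * pb0 i j.

Definition independent (k : nat) (fs : 'I_k -> RF C) : bool :=
  \rank (\matrix_(a < k, i < 4) fderiv i (fs a)) == k.

Definition Q0f : RF C := Q0 (xv 0) (xv 1) (xv 2) (xv 3).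
Definition Q1f : RF C := Q1 (xv 0) (xv 1) (xv 2) (xv 3).
Definition Q2f (beta : C) : RF C := Q2 (cst beta) (xv 0) (xv 1) (xv 2) (xv 3).
Definition J1f (beta : C) : RF C := J1 (cst beta) (xv 0) (xv 1) (xv 2) (xv 3).
Definition J2f (beta : C) : RF C := J2 (cst beta) (xv 0) (xv 1) (xv 2) (xv 3).
Definition J3f (beta : C) : RF C := J3 (cst beta) (xv 0) (xv 1) (xv 2) (xv 3).

Definition Jfam (beta : C) (a : 'I_3) : RF C :=
  match val a with 0 => J1f beta | 1 => J2f beta | _ => J3f beta end.
End RationalFunctions.

From HB Require Import structures.
From mathcomp Require Import all_boot all_order all_algebra.
From mathcomp Require Import fraction.
From mathcomp Require Import mpoly.
From mathcomp Require Import ring.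
Import Order.TTheory GRing.Theory Num.Theory.
Local Open Scope ring_scope.
Set Implicit Arguments.
Unset Strict Implicit.
Unset Printing Implicit Defensive.

(* The map phi permutes the Q_j cyclically: Q0 o phi = Q1, Q1 o phi = Q2 and
   Q2 o phi = Q0.  Hence every symmetric function of Q0, Q1, Q2, in particular
   J1, J2 and J3, is conserved.  For the log-canonical bracket one computes
   {Q0, Q1} = 2 (Q0 Q1 - 1) and cyclically, which makes
   J1 = Q0 Q1 Q2 - Q0 - Q1 - Q2 commute with each Q_j, hence with J2 and J3.
   By the chain rule the Jacobian of (J1, J2, J3) with respect to x0, x1, x2 is
   (Q0 - Q1)(Q1 - Q2)(Q2 - Q0) times that of (Q0, Q1, Q2), and each factor is a
   nonzero rational function, as one sees by clearing denominators and
   evaluating at a point.  Along an orbit J1 stays constant, and a direct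
   computation gives x_(n+6) - J1 x_(n+3) + x_n = 0; so each subsequence
   x_(3n+j) satisfies y_(n+2) = 2 t y_(n+1) - y_n with t = J1/2, the recurrence
   of the Chebyshev polynomials.

   On rational functions the quotient rule does not depend on the chosen
   representative, which makes it a derivation; and substitution along phi is
   a field endomorphism because phi is birational, so p o phi = 0 forces p = 0. *)

Lemma det_mx33 (R : comNzRingType) (A : 'M[R]_3) :
  \det A = A 0 0 * A 1 1 * A 2 2 - A 0 0 * A 1 2 * A 2 1 - A 0 1 * A 1 0 * A 2 2
         + A 0 1 * A 1 2 * A 2 0 + A 0 2 * A 1 0 * A 2 1 - A 0 2 * A 1 1 * A 2 0.
Proof.
set B := fun i j : nat => A (inord i) (inord j).
have AE i j : A i j = B i j by rewrite /B !inord_val.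
rewrite (expand_det_row _ 0) !big_ord_recr big_ord0 /= add0r /cofactor.
rewrite !(expand_det_row _ 0) !big_ord_recr !big_ord0 /= !add0r /cofactor.
rewrite !det_mx11 !mxE !AE /= /bump /=.
rewrite -[((1 %% 3 + 1 %% 3) %% 3)%N]/2%N -[(1 %% 3)%N]/1%N; ring.
Qed.

Lemma row_free_colsub (F : fieldType) m n (A : 'M[F]_(m, n)) (g : 'I_m -> 'I_n) :
  \det (colsub g A) != 0 -> row_free A.
Proof.
move=> det_neq0; rewrite /row_free eqn_leq rank_leq_row /=.
apply: leq_trans (mxrankM_maxl A (colsub g 1%:M)).
by rewrite mulmx_colsub mulmx1 mxrank_unit // unitmxE unitfE.
Qed.

Lemma big_ord4 (V : nmodType) (F : 'I_4 -> V) : \sum_(i < 4) F i = F 0 + F 1 + F 2 + F 3.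
Proof.
rewrite !big_ord_recl big_ord0 addr0 !addrA.
by congr (_ + _ + _ + _); congr F; apply: val_inj.
Qed.

(** * Derivations and the log-canonical bracket *)

Section Derivation.
Variables (K : fieldType) (D : K -> K).
Hypotheses (derivD : {morph D : u v / u + v})
  (derivM : forall u v, D (u * v) = D u * v + u * D v).

Lemma deriv0 : D 0 = 0.
Proof. by apply: (addIr (D 0)); rewrite -derivD !add0r. Qed.

Lemma derivN u : D (- u) = - D u.
Proof. by apply: (addIr (D u)); rewrite -derivD !addNr deriv0. Qed.

Lemma deriv1 : D 1 = 0.
Proof. by apply: (addIr (D 1)); rewrite -{3}[1]mul1r derivM mul1r mulr1 add0r. Qed.

Lemma deriv_nat n : D n%:R = 0.
Proof. by elim: n => [|n IH]; rewrite ?deriv0 // mulrS derivD deriv1 IH addr0. Qed.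

Lemma derivV u : D u^-1 = - D u / u ^+ 2.
Proof.
have [->|u0] := eqVneq u 0; first by rewrite invr0 deriv0 oppr0 mul0r.
have : D (u * u^-1) = 0 by rewrite divff // deriv1.
rewrite derivM => /eqP; rewrite addr_eq0 => /eqP DuV.
apply: (mulfI u0); rewrite -[u * D _]opprK -DuV.
by field; rewrite u0.
Qed.
End Derivation.

Section LogCanonicalBracket.
Variables (K : fieldType) (D : 'I_4 -> K -> K) (b : K) (x : 'I_4 -> K).
Hypotheses (derivD : forall i, {morph D i : u v / u + v})
  (derivM : forall i u v, D i (u * v) = D i u * v + u * D i v)
  (deriv_b : forall i, D i b = 0) (deriv_x : forall i j, D i (x j) = (i == j)%:R)
  (x_neq0 : forall j, x j != 0).

Let derivN i := derivN (derivD i).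
Let derivV i := derivV (derivD i) (derivM i).
Let deriv_nat i := deriv_nat (derivD i) (derivM i).

Local Notation q0 := (Q0 (x 0) (x 1) (x 2) (x 3)).
Local Notation q1 := (Q1 (x 0) (x 1) (x 2) (x 3)).
Local Notation q2 := (Q2 b (x 0) (x 1) (x 2) (x 3)).
Local Notation grad f := (fun i => D i f).

Definition bracket (u v : 'I_4 -> K) : K :=
  x 0 * x 1 * (u 0 * v 1 - u 1 * v 0) + x 0 * x 3 * (u 0 * v 3 - u 3 * v 0)
  + x 1 * x 2 * (u 1 * v 2 - u 2 * v 1) + x 2 * x 3 * (u 2 * v 3 - u 3 * v 2).

Lemma bracketC u v : bracket u v = - bracket v u.
Proof. by rewrite /bracket; ring. Qed.

Lemma bracket_self u : bracket u u = 0.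
Proof. by rewrite /bracket; ring. Qed.

Lemma bracket_combl (c0 c1 c2 : K) (u0 u1 u2 u v : 'I_4 -> K) :
  (forall i, u i = c0 * u0 i + c1 * u1 i + c2 * u2 i) ->
  bracket u v = c0 * bracket u0 v + c1 * bracket u1 v + c2 * bracket u2 v.
Proof. by move=> uE; rewrite /bracket !uE; ring. Qed.

Lemma bracket_combr (c0 c1 c2 : K) (u0 u1 u2 u v : 'I_4 -> K) :
  (forall i, u i = c0 * u0 i + c1 * u1 i + c2 * u2 i) ->
  bracket v u = c0 * bracket v u0 + c1 * bracket v u1 + c2 * bracket v u2.
Proof. by move=> uE; rewrite /bracket !uE; ring. Qed.

Ltac expand_grad :=
  rewrite /Q0 /Q1 /Q2 !(derivD, derivM, derivV, deriv_x, deriv_b) /=.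

Lemma bracket_Q0Q1 : bracket (grad q0) (grad q1) = 2%:R * (q0 * q1 - 1).
Proof. by rewrite /bracket; expand_grad; field; rewrite !x_neq0. Qed.

Lemma bracket_Q1Q2 : bracket (grad q1) (grad q2) = 2%:R * (q1 * q2 - 1).
Proof. by rewrite /bracket; expand_grad; field; rewrite !x_neq0. Qed.

Lemma bracket_Q2Q0 : bracket (grad q2) (grad q0) = 2%:R * (q2 * q0 - 1).
Proof. by rewrite /bracket; expand_grad; field; rewrite !x_neq0. Qed.

Local Notation j1 := (J1 b (x 0) (x 1) (x 2) (x 3)).
Local Notation j2 := (J2 b (x 0) (x 1) (x 2) (x 3)).
Local Notation j3 := (J3 b (x 0) (x 1) (x 2) (x 3)).

Lemma derivJ1 i :
  D i j1 = (q1 * q2 - 1) * D i q0 + (q0 * q2 - 1) * D i q1 + (q0 * q1 - 1) * D i q2.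
Proof.
rewrite /J1; move: (Q0 _ _ _ _) (Q1 _ _ _ _) (Q2 _ _ _ _ _) => a c e.
by rewrite !(derivD, derivN, derivM); ring.
Qed.

Lemma derivJ2 i :
  D i j2 = (q1 + q2) * D i q0 + (q0 + q2) * D i q1 + (q0 + q1) * D i q2.
Proof.
rewrite /J2; move: (Q0 _ _ _ _) (Q1 _ _ _ _) (Q2 _ _ _ _ _) => a c e.
by rewrite !(deriv_nat, derivD, derivN, derivM); ring.
Qed.

Lemma derivJ3 i :
  D i j3 = (q1 * q2) * D i q0 + (q0 * q2) * D i q1 + (q0 * q1) * D i q2.
Proof.
rewrite /J3; move: (Q0 _ _ _ _) (Q1 _ _ _ _) (Q2 _ _ _ _ _) => a c e.
by rewrite !derivM; ring.
Qed.

Lemma bracket_J1_Q0 : bracket (grad j1) (grad q0) = 0.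
Proof.
rewrite (bracket_combl _ derivJ1) bracket_self (bracketC (grad q1)).
by rewrite bracket_Q0Q1 bracket_Q2Q0; ring.
Qed.

Lemma bracket_J1_Q1 : bracket (grad j1) (grad q1) = 0.
Proof.
rewrite (bracket_combl _ derivJ1) bracket_self (bracketC (grad q2)).
by rewrite bracket_Q0Q1 bracket_Q1Q2; ring.
Qed.

Lemma bracket_J1_Q2 : bracket (grad j1) (grad q2) = 0.
Proof.
rewrite (bracket_combl _ derivJ1) bracket_self (bracketC (grad q0)).
by rewrite bracket_Q2Q0 bracket_Q1Q2; ring.
Qed.

Lemma bracket_J1_J2 : bracket (grad j1) (grad j2) = 0.
Proof. by rewrite (bracket_combr _ derivJ2) bracket_J1_Q0 bracket_J1_Q1 bracket_J1_Q2; ring. Qed.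

Lemma bracket_J1_J3 : bracket (grad j1) (grad j3) = 0.
Proof. by rewrite (bracket_combr _ derivJ3) bracket_J1_Q0 bracket_J1_Q1 bracket_J1_Q2; ring. Qed.

Definition jacobian3 (f : 'I_3 -> K) : 'M[K]_3 :=
  \matrix_(a < 3, k < 3) D (widen_ord (leqnSn 3) k) (f a).

Definition Qfam (a : 'I_3) : K := match val a with 0 => q0 | 1 => q1 | _ => q2 end.
Definition Jfam3 (a : 'I_3) : K := match val a with 0 => j1 | 1 => j2 | _ => j3 end.

Lemma det_jacobian_J :
  \det (jacobian3 Jfam3) = (q0 - q1) * (q1 - q2) * (q2 - q0) * \det (jacobian3 Qfam).
Proof. by rewrite !det_mx33 !mxE /= !derivJ1 !derivJ2 !derivJ3; ring. Qed.

Lemma det_jacobian_Q : \det (jacobian3 Qfam) * (x 0 ^+ 2 * x 1 ^+ 2 * x 2 ^+ 2 * x 3) =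
  x 0 ^+ 2 * x 1 * x 2 + x 0 * x 1 * x 3 * (x 1 + x 3)
  - (x 0 + x 2) * (x 1 + x 3) * (x 1 * x 3 + b) + x 1 * x 2 * (x 1 * x 3 + b).
Proof. by rewrite det_mx33 !mxE /=; expand_grad; field; rewrite !x_neq0. Qed.

Lemma Q0_sub_Q1 : (q0 - q1) * (x 1 * x 2) = (x 0 + x 2) * x 2 - (x 1 + x 3) * x 1.
Proof. by rewrite /Q0 /Q1; field; rewrite !x_neq0. Qed.

Lemma Q1_sub_Q2 : (q1 - q2) * (x 0 * x 2 * x 3) =
  (x 1 + x 3) * x 0 * x 3 - x 1 * x 2 * x 3 - x 0 * x 2 * x 2 - b * x 2.
Proof. by rewrite /Q1 /Q2; field; rewrite !x_neq0. Qed.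

Lemma Q2_sub_Q0 : (q2 - q0) * (x 0 * x 1 * x 3) =
  x 1 * x 1 * x 3 + x 0 * x 1 * x 2 + b * x 1 - (x 0 + x 2) * x 0 * x 3.
Proof. by rewrite /Q0 /Q2; field; rewrite !x_neq0. Qed.
End LogCanonicalBracket.

(** * Orbits of the recurrence *)

Section Shift.
Variables (K : fieldType) (b x0 x1 x2 x3 : K).
Hypotheses (x0_neq0 : x0 != 0) (x1_neq0 : x1 != 0) (x3_neq0 : x3 != 0)
  (x4_num_neq0 : x1 * x3 + b != 0).
Local Notation x4 := ((x1 * x3 + b) / x0).

Lemma Q1_shift : Q1 x1 x2 x3 x4 = Q2 b x0 x1 x2 x3.
Proof. by rewrite /Q1 /Q2; field; rewrite x0_neq0 x3_neq0. Qed.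

Lemma Q2_shift : Q2 b x1 x2 x3 x4 = Q0 x0 x1 x2 x3.
Proof. by rewrite /Q2 /Q0; field; rewrite x0_neq0 x1_neq0 x4_num_neq0. Qed.

Lemma J1_shift : J1 b x1 x2 x3 x4 = J1 b x0 x1 x2 x3.
Proof. by rewrite /J1 Q1_shift Q2_shift -[Q0 x1 x2 x3 _]/(Q1 x0 x1 x2 x3); ring. Qed.

Lemma J2_shift : J2 b x1 x2 x3 x4 = J2 b x0 x1 x2 x3.
Proof. by rewrite /J2 Q1_shift Q2_shift -[Q0 x1 x2 x3 _]/(Q1 x0 x1 x2 x3); ring. Qed.

Lemma J3_shift : J3 b x1 x2 x3 x4 = J3 b x0 x1 x2 x3.
Proof. by rewrite /J3 Q1_shift Q2_shift -[Q0 x1 x2 x3 _]/(Q1 x0 x1 x2 x3); ring. Qed.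
End Shift.

Section RMorphismQuantities.
Variables (K L : fieldType) (s : {rmorphism K -> L}) (b x0 x1 x2 x3 : K).

Lemma rmorph_J1 : s (J1 b x0 x1 x2 x3) = J1 (s b) (s x0) (s x1) (s x2) (s x3).
Proof. by rewrite /J1 /Q0 /Q1 /Q2 !(rmorphB, rmorphD, rmorphM, fmorphV). Qed.

Lemma rmorph_J2 : s (J2 b x0 x1 x2 x3) = J2 (s b) (s x0) (s x1) (s x2) (s x3).
Proof. by rewrite /J2 /Q0 /Q1 /Q2 !(rmorph_nat, rmorphB, rmorphD, rmorphM, fmorphV). Qed.

Lemma rmorph_J3 : s (J3 b x0 x1 x2 x3) = J3 (s b) (s x0) (s x1) (s x2) (s x3).
Proof. by rewrite /J3 /Q0 /Q1 /Q2 !(rmorphD, rmorphM, fmorphV). Qed.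
End RMorphismQuantities.

Lemma cheb_solution (K : fieldType) (t : K) (y : nat -> K) :
  t != 0 -> (forall n, y n.+2 = 2%:R * t * y n.+1 - y n) ->
  forall n, y n = (2%:R * y 0%N - y 1%N / t) * chebT t n + (y 1%N / t - y 0%N) * chebU t n.
Proof.
move=> t_neq0 yS n.
pose z n := (2%:R * y 0%N - y 1%N / t) * chebT t n + (y 1%N / t - y 0%N) * chebU t n.
have zS m : z m.+2 = 2%:R * t * z m.+1 - z m by rewrite /z /=; ring.
suff /(_ n) [] : forall n, y n = z n /\ y n.+1 = z n.+1 by [].
elim=> [|m [IH1 IH2]]; first by rewrite /z /=; split; [ring | field].
by split=> //; rewrite yS zS IH1 IH2.
Qed.

Section Orbit.
Variables (K : fieldType) (b x0 x1 x2 x3 : K).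
Local Notation x := (xseq b x0 x1 x2 x3).
Local Notation s n := (iter n (phi_pt b) (x0, x1, x2, x3)).

Lemma iter_phi_pt1 n : (s n).1.1.2 = x n.+1.
Proof. by rewrite /xseq iterS; case: (s n) => [[[]]]. Qed.

Lemma iter_phi_pt2 n : (s n).1.2 = x n.+2.
Proof. by rewrite -iter_phi_pt1 iterS; case: (s n) => [[[]]]. Qed.

Lemma iter_phi_pt3 n : (s n).2 = x n.+3.
Proof. by rewrite -iter_phi_pt2 iterS; case: (s n) => [[[]]]. Qed.

Lemma xseq_step n : x n.+4 = (x n.+1 * x n.+3 + b) / x n.
Proof.
rewrite -iter_phi_pt3 iterS -iter_phi_pt1 -iter_phi_pt3 /xseq.
by case: (s n) => [[[]]].
Qed.

Lemma J1_six_step (y0 y1 y2 y3 : K) : y0 != 0 -> y1 != 0 -> y2 != 0 -> y3 != 0 ->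
  let y4 := (y1 * y3 + b) / y0 in let y5 := (y2 * y4 + b) / y1 in
  let y6 := (y3 * y5 + b) / y2 in
  y6 - J1 b y0 y1 y2 y3 * y3 + y0 = 0.
Proof.
move=> y0_neq0 y1_neq0 y2_neq0 y3_neq0 y4 y5 y6.
by rewrite /y6 /y5 /y4 /J1 /Q0 /Q1 /Q2; field; rewrite y0_neq0 y1_neq0 y2_neq0 y3_neq0.
Qed.

Hypothesis x_neq0 : forall n, x n != 0.
Local Notation j1 := (J1 b x0 x1 x2 x3).

Lemma J1_xseq n : J1 b (x n) (x n.+1) (x n.+2) (x n.+3) = j1.
Proof.
elim: n => [|n IH] //; rewrite -IH xseq_step J1_shift //.
by apply: contraNneq (x_neq0 n.+4) => x4_num0; rewrite xseq_step x4_num0 mul0r.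
Qed.

Lemma xseq_recurrence n : x (n + 6) - j1 * x (n + 3) + x n = 0.
Proof.
rewrite !addnS !addn0 -(J1_xseq n) (xseq_step n.+2) (xseq_step n.+1) (xseq_step n).
exact: J1_six_step.
Qed.

Lemma xseq_chebyshev : (2%:R : K) != 0 -> j1 != 0 -> forall j n,
  x (3 * n + j) =
    (2%:R * x j - 2%:R * x (j + 3) / j1) * chebT (j1 / 2%:R) n
    + (- x j + 2%:R * x (j + 3) / j1) * chebU (j1 / 2%:R) n.
Proof.
move=> two_neq0 j1_neq0 j n.
have t_neq0 : j1 / 2%:R != 0 by rewrite mulf_neq0 ?invr_eq0.
have two_t : 2%:R * (j1 / 2%:R) = j1 by rewrite mulrC divfK.
have xS m : x (3 * m.+2 + j) = 2%:R * (j1 / 2%:R) * x (3 * m.+1 + j) - x (3 * m + j).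
  have := xseq_recurrence (3 * m + j).
  have -> : (3 * m + j + 6 = 3 * m.+2 + j)%N by ring.
  have -> : (3 * m + j + 3 = 3 * m.+1 + j)%N by ring.
  by rewrite two_t => /eqP; rewrite addrAC subr_eq0 => /eqP <-; rewrite addrK.
rewrite (cheb_solution t_neq0 xS) muln0 muln1 add0n (addnC 3).
by congr (_ * _ + _ * _); field; rewrite two_neq0 j1_neq0.
Qed.
End Orbit.

(** * Rational functions on C^4 *)

Section FractionRepresentative.
Variable R : idomainType.
Implicit Types (f : {fraction R}) (p q : R).

Lemma fraction_mul_denom f : f * tofrac (\d_(repr f)) = tofrac (\n_(repr f)).
Proof.
rewrite -{1}[f]reprK; unlock tofrac; rewrite !piE; apply/eqmodP.
rewrite /= FracField.equivfE /FracField.mulf.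
rewrite !numden_Ratio ?mulr1 ?oner_neq0 ?denom_ratioP //.
by rewrite ?mulf_neq0 ?oner_neq0 // mulrC.
Qed.

Lemma fraction_numden f : f = tofrac (\n_(repr f)) / tofrac (\d_(repr f)).
Proof. by rewrite -fraction_mul_denom mulfK // tofrac_eq0 denom_ratioP. Qed.

Lemma tofrac_div_inj p q p' q' : q != 0 -> q' != 0 ->
  tofrac p / tofrac q = tofrac p' / tofrac q' -> p * q' = p' * q.
Proof.
move=> q_neq0 q'_neq0 /eqP; rewrite eqr_div ?tofrac_eq0 // -!rmorphM tofrac_eq.
by move/eqP.
Qed.
End FractionRepresentative.

Lemma quotient_rule_congr (F : fieldType) (a a' b b' c c' d d' : F) :
  b != 0 -> d != 0 -> a * d = c * b -> a' * d + a * d' = c' * b + c * b' ->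
  (a' * b - a * b') / b ^+ 2 = (c' * d - c * d') / d ^+ 2.
Proof.
move=> b_neq0 d_neq0 E E'.
have aE : a = c * b / d by rewrite -E mulfK.
have a'E : a' = (c' * b + c * b' - a * d') / d by rewrite -E' addrK mulfK.
by rewrite a'E aE; field; rewrite b_neq0 d_neq0.
Qed.

Lemma quotient_ruleD (F : fieldType) (a a' b b' c c' d d' : F) : b != 0 -> d != 0 ->
  ((a' * d + a * d' + (c' * b + c * b')) * (b * d) - (a * d + c * b) * (b' * d + b * d'))
    / (b * d) ^+ 2
  = (a' * b - a * b') / b ^+ 2 + (c' * d - c * d') / d ^+ 2.
Proof. by move=> b_neq0 d_neq0; field; rewrite b_neq0 d_neq0. Qed.

Lemma quotient_ruleM (F : fieldType) (a a' b b' c c' d d' : F) : b != 0 -> d != 0 ->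
  ((a' * c + a * c') * (b * d) - (a * c) * (b' * d + b * d')) / (b * d) ^+ 2
  = (a' * b - a * b') / b ^+ 2 * (c / d) + (a / b) * ((c' * d - c * d') / d ^+ 2).
Proof. by move=> b_neq0 d_neq0; field; rewrite b_neq0 d_neq0. Qed.

Section RationalFunctionCalculus.
Variable C : numClosedFieldType.
Local Notation RF := (RF C).
Local Notation MP := {mpoly C[4]}.
Implicit Types (f g : RF) (p q : MP).

Lemma den_neq0 f : den f != 0.
Proof. exact: denom_ratioP. Qed.

Lemma fraction_ex f : exists p q, q != 0 /\ f = tofrac p / tofrac q.
Proof. by exists (num f), (den f); split; [exact: den_neq0 | exact: fraction_numden]. Qed.

Definition quotient_deriv (i : 'I_4) p q : RF :=
  (tofrac p^`M(i) * tofrac q - tofrac p * tofrac q^`M(i)) / tofrac q ^+ 2.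

Lemma quotient_deriv_congr i p q p' q' : q != 0 -> q' != 0 ->
  tofrac p / tofrac q = tofrac p' / tofrac q' ->
  quotient_deriv i p q = quotient_deriv i p' q'.
Proof.
move=> q_neq0 q'_neq0 /tofrac_div_inj E; have {}E := E q_neq0 q'_neq0.
have E' : p^`M(i) * q' + p * q'^`M(i) = p'^`M(i) * q + p' * q^`M(i) by rewrite -!mderivM E.
apply: quotient_rule_congr; rewrite ?tofrac_eq0 //.
  by rewrite -!rmorphM E.
by rewrite -!rmorphM -!rmorphD E'.
Qed.

Lemma fderiv_frac i p q : q != 0 ->
  fderiv i (tofrac p / tofrac q) = quotient_deriv i p q.
Proof.
move=> q_neq0; rewrite /fderiv rmorphXn rmorphB !rmorphM.
by apply: quotient_deriv_congr; rewrite -?fraction_numden ?den_neq0.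
Qed.

Lemma fderivD i : {morph @fderiv C i : f g / f + g}.
Proof.
move=> f g; have [a [b [b_neq0 ->]]] := fraction_ex f.
have [c [d [d_neq0 ->]]] := fraction_ex g.
have bd_neq0 : b * d != 0 by rewrite mulf_neq0.
rewrite addf_div ?tofrac_eq0 // -!rmorphM -rmorphD !fderiv_frac // /quotient_deriv.
rewrite mderivD !mderivM !rmorphD !rmorphM.
by apply: quotient_ruleD; rewrite tofrac_eq0.
Qed.

Lemma fderivM i f g : fderiv i (f * g) = fderiv i f * g + f * fderiv i g.
Proof.
have [a [b [b_neq0 ->]]] := fraction_ex f; have [c [d [d_neq0 ->]]] := fraction_ex g.
have bd_neq0 : b * d != 0 by rewrite mulf_neq0.
rewrite mulf_div -!rmorphM !fderiv_frac // /quotient_deriv !mderivM !rmorphD !rmorphM.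
by apply: quotient_ruleM; rewrite tofrac_eq0.
Qed.

Lemma fderiv_tofrac i p : fderiv i (tofrac p) = tofrac p^`M(i).
Proof.
have -> : tofrac p = tofrac p / tofrac 1 by rewrite rmorph1 divr1.
rewrite fderiv_frac ?oner_neq0 // /quotient_deriv.
by rewrite -mpolyC1 mderivC !rmorph0 mulr0 subr0 !rmorph1 mulr1 expr1n divr1.
Qed.

Lemma fderiv_xv i j : fderiv i (xv C j) = (i == j)%:R.
Proof.
rewrite /xv fderiv_tofrac mderivX mnm1E eq_sym.
have [->|_] := eqVneq j i; last by rewrite scale0r rmorph0.
have -> : (U_(i) - U_(i))%MM = 0%MM by apply/mnmP => k; rewrite mnmBE subnn mnm0E.
by rewrite mpolyX0 scale1r rmorph1.
Qed.

Lemma fderiv_cst i (c : C) : fderiv i (cst c) = 0.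
Proof. by rewrite /cst fderiv_tofrac mderivC rmorph0. Qed.
End RationalFunctionCalculus.

HB.instance Definition _ (C : numClosedFieldType) :=
  GRing.RMorphism.copy (@cst C) ((@tofrac _) \o (@mpolyC 4 C)).

Section Substitution.
Variable C : numClosedFieldType.
Local Notation RF := (RF C).
Local Notation MP := {mpoly C[4]}.
Local Notation msubst h := (mmap (@cst C) h).
Implicit Types (f g : RF) (p q : MP).

Definition alg_independent (h : 'I_4 -> RF) := forall p, p != 0 -> msubst h p != 0.

Variables (h : 'I_4 -> RF) (h_indep : alg_independent h).

Lemma fsubst_frac p q : q != 0 -> fsubst h (tofrac p / tofrac q) = msubst h p / msubst h q.
Proof.
move=> q_neq0; apply/eqP; rewrite /fsubst eqr_div ?h_indep ?den_neq0 //.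
rewrite -!rmorphM; apply/eqP; congr (msubst h _).
by apply: tofrac_div_inj; rewrite -?fraction_numden ?den_neq0.
Qed.

Lemma fsubst_tofrac p : fsubst h (tofrac p) = msubst h p.
Proof.
have -> : tofrac p = tofrac p / tofrac 1 by rewrite rmorph1 divr1.
by rewrite fsubst_frac ?oner_neq0 // rmorph1 divr1.
Qed.

Lemma fsubstD : {morph fsubst h : f g / f + g}.
Proof.
move=> f g; have [a [b [b_neq0 ->]]] := fraction_ex f.
have [c [d [d_neq0 ->]]] := fraction_ex g.
rewrite addf_div ?tofrac_eq0 // -!rmorphM -rmorphD !fsubst_frac ?mulf_neq0 //.
by rewrite rmorphD !rmorphM addf_div ?h_indep.
Qed.

Lemma fsubstM : {morph fsubst h : f g / f * g}.
Proof.
move=> f g; have [a [b [b_neq0 ->]]] := fraction_ex f.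
have [c [d [d_neq0 ->]]] := fraction_ex g.
by rewrite mulf_div -!rmorphM !fsubst_frac ?mulf_neq0 // !rmorphM mulf_div.
Qed.

Lemma fsubst_xv j : fsubst h (xv C j) = h j.
Proof. by rewrite /xv fsubst_tofrac mmapX mmap1U. Qed.

Lemma fsubst_cst (c : C) : fsubst h (cst c) = cst c.
Proof. by rewrite /cst fsubst_tofrac mmapC. Qed.
End Substitution.

Lemma mpoly_neq0_meval n (R : comNzRingType) (v : 'I_n -> R) (p : {mpoly R[n]}) :
  meval v p != 0 -> p != 0.
Proof. by apply: contraNneq => ->; rewrite meval0. Qed.

Section PhiSubstitution.
Variables (C : numClosedFieldType) (beta : C).
Local Notation RF := (RF C).
Local Notation MP := {mpoly C[4]}.
Local Notation msubst h := (mmap (@cst C) h).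

Lemma xv_neq0 j : xv C j != 0.
Proof.
by rewrite /xv tofrac_eq0; apply: (@mpoly_neq0_meval _ _ (fun=> 1)); rewrite mevalXU oner_eq0.
Qed.

Lemma xv_mul_xv_add_cst_neq0 i j : i != j -> xv C i * xv C j + cst beta != 0.
Proof.
move=> ij; rewrite -rmorphM -rmorphD tofrac_eq0 /=.
pose v k := if k == i then 1 else if k == j then 1 - beta else 0.
apply: (@mpoly_neq0_meval _ _ v).
have ji : (j == i) = false by rewrite eq_sym (negbTE ij).
by rewrite mevalD mevalM !mevalXU mevalC /v eqxx ji eqxx mul1r subrK oner_eq0.
Qed.

Definition phi_inv_rf (i : 'I_4) : RF :=
  match val i with
  | 0 => (xv C 0 * xv C 2 + cst beta) / xv C 3
  | 1 => xv C 0
  | 2 => xv C 1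
  | _ => xv C 2
  end.

(* (p o phi) * x0^n is a polynomial r with r o phi^-1 = p * (x0 o phi^-1)^n;
   hence p o phi = 0 forces p = 0. *)
Definition phi_clearable (p : MP) := exists (r : MP) (n : nat),
  msubst (phi_rf beta) p * xv C 0 ^+ n = tofrac r
  /\ msubst phi_inv_rf r = tofrac p * phi_inv_rf 0 ^+ n.

Lemma phi_clearableC c : phi_clearable c%:MP.
Proof. by exists c%:MP, 0%N; rewrite !expr0 !mulr1 !mmapC. Qed.

Lemma phi_clearableD p q : phi_clearable p -> phi_clearable q -> phi_clearable (p + q).
Proof.
move=> [r1 [n1 [E1 F1]]] [r2 [n2 [E2 F2]]].
exists (r1 * 'X_0 ^+ n2 + r2 * 'X_0 ^+ n1), (n1 + n2)%N; split.
  by rewrite !rmorphD !rmorphM !rmorphXn /= -E1 -E2 exprD; rewrite -[tofrac 'X_0]/(xv C 0); ring.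
by rewrite !rmorphD !rmorphM !rmorphXn /= F1 F2 mmapX mmap1U exprD; ring.
Qed.

Lemma phi_clearableM p q : phi_clearable p -> phi_clearable q -> phi_clearable (p * q).
Proof.
move=> [r1 [n1 [E1 F1]]] [r2 [n2 [E2 F2]]].
exists (r1 * r2), (n1 + n2)%N; split.
  by rewrite !rmorphM /= -E1 -E2 exprD; ring.
by rewrite !rmorphM /= F1 F2 exprD; ring.
Qed.

Lemma phi_clearableX i : phi_clearable 'X_i.
Proof.
have msubstX h j : msubst h 'X_j = h j by rewrite mmapX mmap1U.
case: i => [[|[|[|[|//]]]] i_lt].
- have -> : Ordinal i_lt = 0 by exact: val_inj.
  by exists 'X_1, 0%N; rewrite !expr0 !mulr1 !msubstX.
- have -> : Ordinal i_lt = 1 by exact: val_inj.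
  by exists 'X_2, 0%N; rewrite !expr0 !mulr1 !msubstX.
- have -> : Ordinal i_lt = 2 by exact: val_inj.
  by exists 'X_3, 0%N; rewrite !expr0 !mulr1 !msubstX.
have -> : Ordinal i_lt = 3 by exact: val_inj.
exists ('X_1 * 'X_3 + beta%:MP), 1%N.
rewrite !expr1 !rmorphD !rmorphM /= !msubstX mmapC /=.
rewrite /phi_rf /phi_inv_rf /=.
rewrite -[tofrac 'X_1]/(xv C 1) -[tofrac 'X_3]/(xv C 3) -[tofrac _%:MP]/(cst beta).
by split; [rewrite divfK | rewrite [RHS]mulrC divfK]; rewrite ?xv_neq0.
Qed.

Lemma phi_clearable_all p : phi_clearable p.
Proof.
have clearable1 : phi_clearable 1 by rewrite -mpolyC1; exact: phi_clearableC.
elim/mpolyind: p => [|c m p _ _ IH]; first by rewrite -mpolyC0; exact: phi_clearableC.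
apply: phi_clearableD => //; rewrite -mul_mpolyC mpolyXE_id.
apply: phi_clearableM; first exact: phi_clearableC.
elim/big_rec: _ => [|i q _ Pq]; first exact: clearable1.
apply: phi_clearableM => //; elim: (m i) => [|k IH']; first by rewrite expr0.
by rewrite exprS; apply: phi_clearableM => //; exact: phi_clearableX.
Qed.

Lemma phi_rf_alg_independent : alg_independent (phi_rf beta).
Proof.
move=> p p_neq0; apply/negP => /eqP p_phi0.
have [r [n [E F]]] := phi_clearable_all p.
move: E; rewrite p_phi0 mul0r => /esym/eqP; rewrite tofrac_eq0 => /eqP r0.
move: F; rewrite r0 mmap0 => /esym/eqP; rewrite mulf_eq0 expf_eq0 tofrac_eq0 (negbTE p_neq0) /=.
rewrite mulf_eq0 invr_eq0 (negbTE (xv_neq0 _)) orbF andbC.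
by rewrite (negbTE (xv_mul_xv_add_cst_neq0 _)).
Qed.
End PhiSubstitution.

Definition phi_subst (C : numClosedFieldType) (beta : C) : RF C -> RF C :=
  fsubst (phi_rf beta).

Lemma phi_subst_tofrac (C : numClosedFieldType) (beta : C) p :
  phi_subst beta (tofrac p) = mmap (@cst C) (phi_rf beta) p.
Proof. exact/fsubst_tofrac/phi_rf_alg_independent. Qed.

HB.instance Definition _ (C : numClosedFieldType) (beta : C) :=
  GRing.isNmodMorphism.Build (RF C) (RF C) (phi_subst beta)
    (etrans (phi_subst_tofrac beta 0) (rmorph0 _),
     fsubstD (phi_rf_alg_independent beta)).

HB.instance Definition _ (C : numClosedFieldType) (beta : C) :=
  GRing.isMonoidMorphism.Build (RF C) (RF C) (phi_subst beta)
    (etrans (phi_subst_tofrac beta 1) (rmorph1 _),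
     fsubstM (phi_rf_alg_independent beta)).

Section Conservation.
Variables (C : numClosedFieldType) (beta : C).

Let phi_subst_xv i : phi_subst beta (xv C i) = phi_rf beta i.
Proof. exact/fsubst_xv/phi_rf_alg_independent. Qed.

Let phi_subst_cst : phi_subst beta (cst beta) = cst beta.
Proof. exact/fsubst_cst/phi_rf_alg_independent. Qed.

Let xv_neq0 := @xv_neq0 C.
Let x4_num_neq0 : xv C 1 * xv C 3 + cst beta != 0.
Proof. exact: xv_mul_xv_add_cst_neq0. Qed.

Lemma J1f_conserved : conserved beta (J1f beta).
Proof.
rewrite /conserved -/(phi_subst _ _) rmorph_J1 -[GRing.RMorphism.sort _]/(phi_subst beta).
rewrite !phi_subst_xv phi_subst_cst /phi_rf /=.
exact: J1_shift (xv_neq0 0) (xv_neq0 1) (xv_neq0 3) x4_num_neq0.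
Qed.

Lemma J2f_conserved : conserved beta (J2f beta).
Proof.
rewrite /conserved -/(phi_subst _ _) rmorph_J2 -[GRing.RMorphism.sort _]/(phi_subst beta).
rewrite !phi_subst_xv phi_subst_cst /phi_rf /=.
exact: J2_shift (xv_neq0 0) (xv_neq0 1) (xv_neq0 3) x4_num_neq0.
Qed.

Lemma J3f_conserved : conserved beta (J3f beta).
Proof.
rewrite /conserved -/(phi_subst _ _) rmorph_J3 -[GRing.RMorphism.sort _]/(phi_subst beta).
rewrite !phi_subst_xv phi_subst_cst /phi_rf /=.
exact: J3_shift (xv_neq0 0) (xv_neq0 1) (xv_neq0 3) x4_num_neq0.
Qed.

End Conservation.

Section RationalFunctionInvariants.
Variables (C : numClosedFieldType) (beta : C).
Local Notation RF := (RF C).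
Local Notation MP := {mpoly C[4]}.

Let fderiv_beta i : fderiv i (cst beta) = 0 := fderiv_cst i beta.

Lemma pbracketE (f g : RF) :
  pbracket f g = bracket (xv C) (fun i => fderiv i f) (fun j => fderiv j g).
Proof. by rewrite /pbracket /pb0 big_ord4 !big_ord4 /pcoef /bracket /=; ring. Qed.

Lemma pbracket_J1 :
  [/\ pbracket (J1f beta) (J2f beta) = 0, pbracket (J1f beta) (J3f beta) = 0,
      pbracket (J1f beta) (@Q0f C) = 0, pbracket (J1f beta) (@Q1f C) = 0
    & pbracket (J1f beta) (Q2f beta) = 0].
Proof.
rewrite !pbracketE; split.
- exact: bracket_J1_J2 (@fderivD C) (@fderivM C) fderiv_beta (@fderiv_xv C) (@xv_neq0 C).
- exact: bracket_J1_J3 (@fderivD C) (@fderivM C) fderiv_beta (@fderiv_xv C) (@xv_neq0 C).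
- exact: bracket_J1_Q0 (@fderivD C) (@fderivM C) fderiv_beta (@fderiv_xv C) (@xv_neq0 C).
- exact: bracket_J1_Q1 (@fderivD C) (@fderivM C) fderiv_beta (@fderiv_xv C) (@xv_neq0 C).
- exact: bracket_J1_Q2 (@fderivD C) (@fderivM C) fderiv_beta (@fderiv_xv C) (@xv_neq0 C).
Qed.

Lemma rf_neq0_meval (f m : RF) (p : MP) (v : 'I_4 -> C) :
  f * m = tofrac p -> meval v p != 0 -> f != 0.
Proof.
move=> fE /mpoly_neq0_meval; apply: contraNneq => f0.
by rewrite -tofrac_eq0 -fE f0 mul0r.
Qed.

Lemma Q0f_sub_Q1f_neq0 : Q0f C - Q1f C != 0.
Proof.
apply: (@rf_neq0_meval _ (xv C 1 * xv C 2) (('X_0 + 'X_2) * 'X_2 - ('X_1 + 'X_3) * 'X_1)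
  (fun i => [:: 0; 0; 1; 0]`_i)).
  by rewrite (Q0_sub_Q1 (@xv_neq0 C)) !(rmorphB, rmorphD, rmorphM).
by rewrite !(mevalB, mevalD, mevalM, mevalXU) /= (_ : _ - _ = 1) ?oner_eq0 //; ring.
Qed.

Lemma Q1f_sub_Q2f_neq0 : Q1f C - Q2f beta != 0.
Proof.
apply: (@rf_neq0_meval _ (xv C 0 * xv C 2 * xv C 3)
  (('X_1 + 'X_3) * 'X_0 * 'X_3 - 'X_1 * 'X_2 * 'X_3 - 'X_0 * 'X_2 * 'X_2 - beta%:MP * 'X_2)
  (fun i => [:: 1; 0; 0; 1]`_i)).
  by rewrite (Q1_sub_Q2 _ (@xv_neq0 C)) !(rmorphB, rmorphD, rmorphM).
rewrite !(mevalB, mevalD, mevalM, mevalXU, mevalC) /=.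
by rewrite (_ : _ - _ = 1) ?oner_eq0 //; ring.
Qed.

Lemma Q2f_sub_Q0f_neq0 : Q2f beta - Q0f C != 0.
Proof.
apply: (@rf_neq0_meval _ (xv C 0 * xv C 1 * xv C 3)
  ('X_1 * 'X_1 * 'X_3 + 'X_0 * 'X_1 * 'X_2 + beta%:MP * 'X_1 - ('X_0 + 'X_2) * 'X_0 * 'X_3)
  (fun i => [:: 1; 0; 0; 1]`_i)).
  by rewrite (Q2_sub_Q0 _ (@xv_neq0 C)) !(rmorphB, rmorphD, rmorphM).
rewrite !(mevalB, mevalD, mevalM, mevalXU, mevalC) /=.
by rewrite (_ : _ - _ = -1) ?oppr_eq0 ?oner_eq0 //; ring.
Qed.

Lemma det_jacobian_Qf_neq0 : \det (jacobian3 (@fderiv C) (Qfam (cst beta) (xv C))) != 0.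
Proof.
apply: (@rf_neq0_meval _ (xv C 0 ^+ 2 * xv C 1 ^+ 2 * xv C 2 ^+ 2 * xv C 3)
  ('X_0 ^+ 2 * 'X_1 * 'X_2 + 'X_0 * 'X_1 * 'X_3 * ('X_1 + 'X_3)
   - ('X_0 + 'X_2) * ('X_1 + 'X_3) * ('X_1 * 'X_3 + beta%:MP)
   + 'X_1 * 'X_2 * ('X_1 * 'X_3 + beta%:MP))
  (fun i => [:: 2%:R; 2%:R; -1; -4%:R]`_i)).
  rewrite (det_jacobian_Q (@fderivD C) (@fderivM C) fderiv_beta (@fderiv_xv C) (@xv_neq0 C)).
  by rewrite !(rmorphXn, rmorphD, rmorphN, rmorphM).
rewrite !(mevalD, mevalN, mevalM, rmorphXn, mevalXU, mevalC) /=.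
by rewrite (_ : _ + _ = 24%:R) ?pnatr_eq0 //; ring.
Qed.

Lemma independent_J : independent (Jfam beta).
Proof.
apply: (row_free_colsub (g := widen_ord (leqnSn 3))).
have -> : colsub (widen_ord (leqnSn 3)) (\matrix_(a < 3, i < 4) fderiv i (Jfam beta a))
    = jacobian3 (@fderiv C) (Jfam3 (cst beta) (xv C)).
  by apply/matrixP => a k; rewrite !mxE; case: a => [[|[|[|]]]].
rewrite (det_jacobian_J _ _ (@fderivD C) (@fderivM C)) !mulf_neq0 //.
- exact: Q0f_sub_Q1f_neq0.
- exact: Q1f_sub_Q2f_neq0.
- exact: Q2f_sub_Q0f_neq0.
- exact: det_jacobian_Qf_neq0.
Qed.
End RationalFunctionInvariants.

Theorem theorem3p9 (C : numClosedFieldType) (beta : C) :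
  [/\ (* superintegrability: three independent conserved quantities *)
      [/\ conserved beta (J1f beta), conserved beta (J2f beta),
          conserved beta (J3f beta) & independent (Jfam beta)],
      (* Poisson commutation relations *)
      [/\ pbracket (J1f beta) (J2f beta) = 0,
          pbracket (J1f beta) (J3f beta) = 0,
          pbracket (J1f beta) (@Q0f C) = 0,
          pbracket (J1f beta) (@Q1f C) = 0 &
          pbracket (J1f beta) (Q2f beta) = 0] &
      (* linear recurrence and explicit solution of the initial value problem *)
      forall x0 x1 x2 x3 : C,
        let x := xseq beta x0 x1 x2 x3 in
        let j1 := J1 beta x0 x1 x2 x3 in
        (forall n, x n != 0) ->
        (forall n, x (n + 6)%N - j1 * x (n + 3)%N + x n = 0) /\
        (j1 != 0 ->
         forall (j : nat) (n : nat), (j < 3)%N ->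
           x (3 * n + j)%N =
             (2%:R * x j - 2%:R * x (j + 3)%N / j1) * chebT (j1 / 2%:R) n
             + (- x j + 2%:R * x (j + 3)%N / j1) * chebU (j1 / 2%:R) n)].
Proof.
split.
- split; [exact: J1f_conserved | exact: J2f_conserved | exact: J3f_conserved
         | exact: independent_J].
- exact: pbracket_J1.
move=> x0 x1 x2 x3 x j1 x_neq0; split; first exact: xseq_recurrence.
move=> j1_neq0 j n _; apply: xseq_chebyshev => //.
by rewrite pnatr_eq0.
Qed.
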